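(* There is a constant $C>0$, independent of the mesh, such that every solution $u_h\in V_h$ of the scheme satisfies $\|u_h\|_{L^\infty(\overline\Omega)}\le C$. Furthermore, let $p\in\mathbb R^d$, let $M\ge \|f\|_{L^\infty(\Omega)}\max_{B\in\mathbb S_1}\sqrt[d]{\det B}=\|f\|_{L^\infty(\Omega)}/d$, and let $\zeta(x)=\frac M2|x-p|^2$. Then, for every mesh, $u_h-I_h\zeta$ attains its minimum over $\overline\Omega$ at a boundary node and $u_h+I_h\zeta$ attains its maximum over $\overline\Omega$ at a boundary node.
   Context: Standing setting: $d\ge2$, $\Omega\subset\mathbb R^d$ a bounded open strictly convex domain, $f:\Omega\to[0,\infty)$ bounded and continuous, $g:\partial\Omega\to\mathbb R$ bounded and continuous. $\mathbb S$: real symmetric $d\times d$ matrices; $\mathbb S_+$: positive semidefinite ones; $\mathbb S_1=\{B\in\mathbb S_+:\operatorname{tr}B=1\}$; $|\cdot|$ is the Euclidean norm. Mesh: $\mathcal T_h$ is a shape-regular simplicial partition whose union $\Omega_h$ satisfies $\Omega_h\subset\Omega$; its nodes are $\mathcal N_h=\mathcal N_h^I\cup\mathcal N_h^B$, where the boundary nodes $\mathcal N_h^B$ (nodes on $\partial\Omega_h$) lie on $\partial\Omega$ and $\mathcal N_h^I$ are the interior nodes. $V_h$ is the space of continuous piecewise linear functions on $\mathcal T_h$ and $I_h$ the nodal interpolant onto $V_h$; functions on $\Omega_h$ (in particular elements of $V_h$) are extended to $\overline\Omega$ by being constant along the outer normal directions of $\partial\Omega_h$. $B(\overline\Omega)$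 denotes the bounded real functions on $\overline\Omega$. Controls: $\mathbf F\subset\mathbb R^{d\times d}\times\{\text{diagonal }d\times d\text{ matrices}\}$ is compact, the map $(\sigma,\lambda)\mapsto\sigma\lambda\sigma^T$ is a bijection from $\mathbf F$ onto $\mathbb S_1$, and every $\lambda$ occurring in $\mathbf F$ has nonnegative diagonal entries and the same trace $C>0$. For $B\in\mathbb S_1$, $(\sigma(B),\lambda(B))$ denotes its preimage; $\sigma_j$ is the $j$th column of $\sigma$ and $\lambda_j$ the $j$th diagonal entry of $\lambda$. Stencil size: $k=k(h,x)>0$ is such that $x\pm k(h,x)\sigma_j\in\overline\Omega_h$ for every $x\in\Omega_h$ and every column $\sigma_j$ of every $\sigma$ with $(\sigma,\lambda)\in\mathbf F$. Scheme: for $B\in\mathbb S_1$, $s\in\mathbb R$, $\phi\in B(\overline\Omega)$, with $(\sigma,\lambda)=(\sigma(B),\lambda(B))$ and $k=k(h,x_i)$, set $L_h^B(s,\phi)(x_i)=-\sum_{j=1}^d\lambda_j\frac{\phi(x_i-k\sigma_j)-2s+\phi(x_i+k\sigma_j)}{k^2}+f(x_i)\sqrt[d]{\det B}$ for $x_i\in\mathcal N_h^I$, and $L_h^B(s,\phi)(x_i)=s-g(x_i)$ for $x_i\in\mathcal N_h^B$; $H_h(s,\phi)(x_i)=\sup_{B\in\mathbb S_1}L_h^B(s,\phi)(x_i)$. The discrete solution $u_h\in V_h$ is the (unique) function with $H_h(u_h(x_i),u_h)(x_i)=0$ for all $x_i\in\mathcal N_h$. *)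

From Stdlib Require Import Reals List.
From mathcomp Require Import all_boot.
From mathcomp Require Import fingroup perm.
Set Implicit Arguments. Unset Strict Implicit. Unset Printing Implicit Defensive.
Local Open Scope R_scope.

Definition pt (d : nat) := 'I_d -> R.
Definition mat (d : nat) := 'I_d -> 'I_d -> R.

Definition rsum {I : finType} (F : I -> R) : R := \big[Rplus/0]_(i : I) F i.
Definition rprod {I : finType} (F : I -> R) : R := \big[Rmult/1]_(i : I) F i.

Definition dot {d} (x y : pt d) : R := rsum (fun i => x i * y i).
Definition norm {d} (x : pt d) : R := sqrt (dot x x).
Definition psub {d} (x y : pt d) : pt d := fun i => x i - y i.

Definition det {d} (A : mat d) : R :=
  rsum (fun s : 'S_d => (if odd_perm s then -1 else 1) * rprod (fun i => A i (s i))).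
Definition tr {d} (A : mat d) : R := rsum (fun i => A i i).

Definition symmetric {d} (A : mat d) : Prop := forall i j, A i j = A j i.
Definition psd {d} (A : mat d) : Prop :=
  symmetric A /\ forall v : pt d, 0 <= rsum (fun i => rsum (fun j => v i * A i j * v j)).
Definition S1 {d} (B : mat d) : Prop := psd B /\ tr B = 1.

Definition nroot (d : nat) (x : R) : R :=
  if Rle_dec x 0 then 0 else Rpower x (/ INR d).

(** sigma * diag(lambda) * sigma^T ; lambda = vector of diagonal entries *)
Definition ctrl_mat {d} (s : mat d) (l : pt d) : mat d :=
  fun i j => rsum (fun k => s i k * l k * s j k).

Definition is_open {d} (A : pt d -> Prop) : Prop :=
  forall x, A x -> exists r, 0 < r /\ forall y, norm (psub y x) < r -> A y.
Definition interior {d} (A : pt d -> Prop) (x : pt d) : Prop :=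
  exists r, 0 < r /\ forall y, norm (psub y x) < r -> A y.
Definition closure {d} (A : pt d -> Prop) (x : pt d) : Prop :=
  forall e, 0 < e -> exists y, A y /\ norm (psub x y) < e.
Definition bdry {d} (A : pt d -> Prop) (x : pt d) : Prop :=
  closure A x /\ ~ interior A x.
Definition bounded_set {d} (A : pt d -> Prop) : Prop :=
  exists Rb, forall x, A x -> norm x <= Rb.
Definition strictly_convex {d} (A : pt d -> Prop) : Prop :=
  forall x y t, closure A x -> closure A y -> x <> y -> 0 < t < 1 ->
    A (fun i => (1 - t) * x i + t * y i).
Definition bounded_on {d} (A : pt d -> Prop) (h : pt d -> R) : Prop :=
  exists Rb, forall x, A x -> Rabs (h x) <= Rb.
Definition cont_on {d} (A : pt d -> Prop) (h : pt d -> R) : Prop :=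
  forall x, A x -> forall e, 0 < e -> exists dl, 0 < dl /\
    forall y, A y -> norm (psub y x) < dl -> Rabs (h y - h x) < e.

(** Compactness of the control set F in R^{dxd} x R^d (Heine-Borel). *)
Definition cdist {d} (s1 : mat d) (l1 : pt d) (s2 : mat d) (l2 : pt d) : R :=
  sqrt (rsum (fun i => rsum (fun j => (s1 i j - s2 i j) ^ 2))
        + rsum (fun i => (l1 i - l2 i) ^ 2)).
Definition compact_ctrl {d} (F : mat d -> pt d -> Prop) : Prop :=
  (exists Rb, forall s l, F s l -> cdist s l (fun _ _ => 0) (fun _ => 0) <= Rb) /\
  (forall s l, (forall e, 0 < e -> exists s' l', F s' l' /\ cdist s l s' l' < e) -> F s l).

Definition simplex (d : nat) := 'I_d.+1 -> pt d.
Definition in_hull {d} (S : simplex d) (P : 'I_d.+1 -> Prop) (x : pt d) : Prop :=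
  exists w : 'I_d.+1 -> R, (forall k, 0 <= w k) /\ rsum w = 1 /\
    (forall k, ~ P k -> w k = 0) /\ forall i, x i = rsum (fun k => w k * S k i).
Definition in_simplex {d} (S : simplex d) (x : pt d) : Prop := in_hull S (fun _ => True) x.
Definition nondeg {d} (S : simplex d) : Prop :=
  det (fun i j => S (lift ord0 i) j - S ord0 j) <> 0.
Definition is_vertex {d} (S : simplex d) (y : pt d) : Prop := exists k, S k = y.
Definition conforming {d} (T : list (simplex d)) : Prop :=
  forall S1 S2, In S1 T -> In S2 T -> forall x, in_simplex S1 x -> in_simplex S2 x ->
    in_hull S1 (fun k => is_vertex S2 (S1 k)) x.
Definition mesh_cl {d} (T : list (simplex d)) (x : pt d) : Prop :=
  exists S, In S T /\ in_simplex S x.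
Definition mesh_int {d} (T : list (simplex d)) : pt d -> Prop := interior (mesh_cl T).
Definition node {d} (T : list (simplex d)) (x : pt d) : Prop :=
  exists S, In S T /\ is_vertex S x.
Definition bnode {d} (T : list (simplex d)) (x : pt d) : Prop :=
  node T x /\ bdry (mesh_cl T) x.
Definition inode {d} (T : list (simplex d)) (x : pt d) : Prop :=
  node T x /\ mesh_int T x.

Definition admissible_mesh {d} (Om : pt d -> Prop) (T : list (simplex d)) : Prop :=
  (forall S, In S T -> nondeg S) /\ conforming T /\
  (forall x, mesh_int T x -> Om x) /\
  (forall x, bnode T x -> bdry Om x).
Definition shape_reg {d} (kappa : R) (T : list (simplex d)) : Prop :=
  forall S, In S T -> exists (c : pt d) rho, 0 < rho /\
    (forall y, norm (psub y c) < rho -> in_simplex S y) /\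
    forall x y, in_simplex S x -> in_simplex S y -> norm (psub x y) <= kappa * rho.

Definition Vh {d} (T : list (simplex d)) (u : pt d -> R) : Prop :=
  forall S, In S T -> exists (a : R) (b : pt d), forall x, in_simplex S x -> u x = a + dot b x.
Definition interp {d} (T : list (simplex d)) (z v : pt d -> R) : Prop :=
  Vh T v /\ forall x, node T x -> v x = z x.
(** extension to \overline\Omega, constant along outer normal directions of
    \partial\Omega_h: a function phi on \overline\Omega_h is extended by phi o e *)
Definition valid_ext {d} (Om : pt d -> Prop) (T : list (simplex d)) (e : pt d -> pt d) : Prop :=
  forall x, closure Om x ->
    (mesh_cl T x -> e x = x) /\
    (~ mesh_cl T x -> bdry (mesh_cl T) (e x) /\
       exists r, 0 < r /\ forall z, mesh_cl T z -> norm (psub z (e x)) < r ->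
         dot (psub x (e x)) (psub z (e x)) <= 0).

Definition stencil_ok {d} (F : mat d -> pt d -> Prop) (T : list (simplex d)) (k : pt d -> R) : Prop :=
  forall x, mesh_int T x -> 0 < k x /\
    forall s l (j : 'I_d), F s l ->
      mesh_cl T (fun i => x i - k x * s i j) /\ mesh_cl T (fun i => x i + k x * s i j).

Definition LhB {d} (f g : pt d -> R) (sig : mat d -> mat d) (lam : mat d -> pt d)
  (T : list (simplex d)) (k : pt d -> R) (B : mat d) (s : R) (phi : pt d -> R)
  (x : pt d) (r : R) : Prop :=
  (inode T x /\
     r = - rsum (fun j => lam B j *
            (phi (fun i => x i - k x * sig B i j) - 2 * s + phi (fun i => x i + k x * sig B i j))
            / (k x ^ 2))
         + f x * nroot d (det B)) \/
  (bnode T x /\ r = s - g x).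

Definition Hh_zero {d} (f g : pt d -> R) sig lam T k (s : R) (phi : pt d -> R) (x : pt d) : Prop :=
  is_lub (fun r => exists B : mat d, S1 B /\ LhB f g sig lam T k B s phi x r) 0.

Definition solves {d} (f g : pt d -> R) sig lam (T : list (simplex d)) k (e : pt d -> pt d)
  (u : pt d -> R) : Prop :=
  Vh T u /\ forall x, node T x -> Hh_zero f g sig lam T k (u x) (fun y => u (e y)) x.

Definition vsum {d} (l : pt d) : R := rsum (fun j : 'I_d => l j).

(* Both parts are discrete minimum principles.  On each simplex a function of V_h
   is affine, so a function concave on every simplex is minimised over the mesh at a
   node.  At an interior node the scheme says that inf_B Dh u B is approximately
   f (det B)^(1/d) >= 0, while a quadratic q = c |x - p|^2 has Dh q B = 2c for every
   B in S_1, the controls having trace one.  A minimising node of u - I_h zeta, or of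
   -(u + I_h zeta), can therefore not be interior once ties are broken by |x|^2.  For
   the L^oo bound, compare u with the boundary data from above directly and from below
   through the barrier centred at the origin. *)

From Stdlib Require Import Reals Lra Lia List FunctionalExtensionality Classical.
From mathcomp Require Import all_boot all_algebra fingroup perm Rstruct.
Import GRing.Theory.
Set Implicit Arguments. Unset Strict Implicit. Unset Printing Implicit Defensive.
Local Open Scope R_scope.

Section FiniteSums.
Variable I : finType.
Implicit Types F G : I -> R.

Lemma rsum_ext F G : (forall i, F i = G i) -> rsum F = rsum G.
Proof. by move=> FG; apply: eq_bigr => i _. Qed.

Lemma rsumD F G : rsum (fun i => F i + G i) = rsum F + rsum G.
Proof. exact: big_split. Qed.

Lemma rsumMl (c : R) F : rsum (fun i => c * F i) = c * rsum F.
Proof. by rewrite /rsum big_distrr. Qed.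

Lemma rsumN F : rsum (fun i => - F i) = - rsum F.
Proof. exact: sumrN. Qed.

Lemma rsumB F G : rsum (fun i => F i - G i) = rsum F - rsum G.
Proof. exact: sumrB. Qed.

Lemma rsum0 : rsum (fun _ : I => 0) = 0.
Proof. exact: big1. Qed.

Lemma rsum_const (c : R) : rsum (fun _ : I => c) = INR #|I| * c.
Proof.
rewrite /rsum big_const; elim: #|I| => [|n IH]; first by rewrite /=; lra.
by rewrite iterS IH S_INR; lra.
Qed.

Lemma rsum_delta (i0 : I) F : rsum (fun i => if i == i0 then F i else 0) = F i0.
Proof. by rewrite /rsum (bigD1 i0) //= eqxx big1 ?Rplus_0_r // => i /negPf ->. Qed.

Lemma ler_rsum F G : (forall i, F i <= G i) -> rsum F <= rsum G.
Proof. by move=> FG; apply: (big_ind2 (fun a b => a <= b)) => // *; lra. Qed.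

Lemma rsum_ge0 F : (forall i, 0 <= F i) -> 0 <= rsum F.
Proof. by move=> F0; rewrite -rsum0; apply: ler_rsum. Qed.

Lemma ler_rsum_term F i0 : (forall i, 0 <= F i) -> F i0 <= rsum F.
Proof.
move=> F0; rewrite /rsum (bigD1 i0) //=.
suff : 0 <= \big[Rplus/0]_(i | i != i0) F i by lra.
by apply: (big_ind (fun a => 0 <= a)) => // *; lra.
Qed.

Lemma abs_rsum_le F : Rabs (rsum F) <= rsum (fun i => Rabs (F i)).
Proof.
apply: (big_ind2 (fun a b => Rabs a <= b)) => [|a b c e ? ?|i _]; last lra.
  by rewrite Rabs_R0; lra.
by apply: Rle_trans (Rabs_triang _ _) _; lra.
Qed.

End FiniteSums.

Lemma exchange_rsum (I J : finType) (F : I -> J -> R) :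
  rsum (fun i => rsum (fun j => F i j)) = rsum (fun j => rsum (fun i => F i j)).
Proof. exact: exchange_big. Qed.

Lemma rsum_recl n (F : 'I_n.+1 -> R) :
  rsum F = F ord0 + rsum (fun i : 'I_n => F (lift ord0 i)).
Proof. exact: big_ord_recl. Qed.

(** * Simplices, barycentric coordinates and convexity *)

Definition nsq {d} (x : pt d) : R := dot x x.

Lemma nsq_ge0 d (x : pt d) : 0 <= nsq x.
Proof. by apply: rsum_ge0 => i; nra. Qed.

Lemma norm_sqr d (x : pt d) : norm x ^ 2 = nsq x.
Proof. by rewrite /norm /= Rmult_1_r sqrt_sqrt //; apply: nsq_ge0. Qed.

Lemma abs_coord_le_norm d (x : pt d) i : Rabs (x i) <= norm x.
Proof.
rewrite /norm -sqrt_Rsqr_abs; apply: sqrt_le_1_alt.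
by apply: (ler_rsum_term (F := fun i => x i * x i)) => j; nra.
Qed.

Lemma norm_psubxx d (x : pt d) : norm (psub x x) = 0.
Proof.
rewrite /norm /dot /psub (rsum_ext (G := fun _ => 0)) => [|i]; last ring.
by rewrite rsum0 sqrt_0.
Qed.

Lemma nsq_second_difference d (x a p : pt d) :
  nsq (psub (fun i => x i - a i) p) - 2 * nsq (psub x p)
    + nsq (psub (fun i => x i + a i) p) = 2 * nsq a.
Proof.
rewrite /nsq /dot /psub -!rsumMl -rsumB -rsumD.
by apply: rsum_ext => i; ring.
Qed.

Definition bary {d} (S : simplex d) (a : 'I_d.+1 -> R) (y : pt d) : Prop :=
  (forall k, 0 <= a k) /\ rsum a = 1 /\ forall i, y i = rsum (fun k => a k * S k i).

Lemma in_simplexP d (S : simplex d) y : in_simplex S y <-> exists a, bary S a y.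
Proof.
by split=> [[a [a0 [a1 [_ ya]]]]|[a [a0 [a1 ya]]]]; exists a.
Qed.

Lemma bary_vertex d (S : simplex d) k0 :
  bary S (fun k => if k == k0 then 1 else 0) (S k0).
Proof.
split; first by move=> k; case: (k == k0); lra.
split; first exact: (rsum_delta k0 (fun _ => 1)).
move=> i; rewrite -(rsum_delta k0 (fun k => S k i)).
by apply: rsum_ext => k; case: (k == k0); ring.
Qed.

Lemma vertex_in_simplex d (S : simplex d) k : in_simplex S (S k).
Proof. by apply/in_simplexP; eexists; apply: bary_vertex. Qed.

Lemma affine_bary d (S : simplex d) (u : pt d -> R) c b a y :
  (forall y, in_simplex S y -> u y = c + dot b y) -> bary S a y ->
  u y = rsum (fun k => a k * u (S k)).
Proof.
move=> u_aff ay; have [_ [a1 ya]] := ay.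
have yS : in_simplex S y by apply/in_simplexP; exists a.
rewrite u_aff // (rsum_ext (G := fun k => c * a k + a k * dot b (S k))); last first.
  by move=> k; rewrite u_aff; [ring | apply: vertex_in_simplex].
rewrite rsumD rsumMl a1 Rmult_1_r; congr (_ + _).
rewrite /dot (rsum_ext (F := fun i => b i * y i)
  (G := fun i => rsum (fun k => b i * (a k * S k i)))) => [|i]; last by rewrite ya rsumMl.
by rewrite exchange_rsum; apply: rsum_ext => k; rewrite -rsumMl; apply: rsum_ext => i; ring.
Qed.

Lemma sqr_mean_le n (a x : 'I_n -> R) (y p : R) :
  (forall k, 0 <= a k) -> rsum a = 1 -> y = rsum (fun k => a k * x k) ->
  (y - p) ^ 2 <= rsum (fun k => a k * (x k - p) ^ 2).
Proof.
move=> a0 a1 ya.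
have var_ge0 : 0 <= rsum (fun k => a k * (x k - y) ^ 2).
  by apply: rsum_ge0 => k; apply: Rmult_le_pos => //; apply: pow2_ge_0.
rewrite (rsum_ext (G := fun k => a k * (x k - y) ^ 2
    + (2 * (y - p) * (a k * x k) + ((y - p) ^ 2 - 2 * (y - p) * y) * a k))) => [|k]; last ring.
by rewrite !rsumD !rsumMl -ya a1; nra.
Qed.

Lemma nsq_bary_le d (S : simplex d) a y p :
  bary S a y -> nsq (psub y p) <= rsum (fun k => a k * nsq (psub (S k) p)).
Proof.
move=> [a0 [a1 ya]]; rewrite /nsq /dot /psub.
rewrite (rsum_ext (F := fun k => a k * _)
  (G := fun k => rsum (fun i => a k * (S k i - p i) ^ 2))); last first.
  by move=> k; rewrite -rsumMl; apply: rsum_ext => i; ring.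
rewrite exchange_rsum; apply: ler_rsum => i.
have := sqr_mean_le (x := fun k => S k i) (p i) a0 a1 (ya i).
by rewrite /= !Rmult_1_r.
Qed.

Lemma subset_closure d (A : pt d -> Prop) x : A x -> closure A x.
Proof. by move=> Ax e e0; exists x; rewrite norm_psubxx. Qed.

Definition convex_set {d} (C : pt d -> Prop) : Prop :=
  forall x y t, C x -> C y -> 0 <= t <= 1 -> C (fun i => (1 - t) * x i + t * y i).

Lemma convex_bary_closed d (C : pt d -> Prop) : convex_set C ->
  forall n (P : 'I_n.+1 -> pt d) a, (forall k, 0 <= a k) -> rsum a = 1 ->
  (forall k, C (P k)) -> C (fun i => rsum (fun k => a k * P k i)).
Proof.
move=> Cconv; elim=> [|n IH] P a a0 a1 CP.
  suff -> : (fun i => rsum (fun k => a k * P k i)) = P ord0 by [].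
  apply: functional_extensionality => i; move: a1.
  by rewrite !rsum_recl /rsum !big_ord0 !Rplus_0_r => ->; ring.
rewrite rsum_recl in a1; set s := rsum _ in a1.
have s0 : 0 <= s by apply: rsum_ge0 => k.
have [s_eq0|s_gt0] := Req_dec s 0.
  have tail0 k : a (lift ord0 k) = 0.
    have := ler_rsum_term (F := fun k => a (lift ord0 k)) k (fun k => a0 _).
    by rewrite -/s s_eq0; have := a0 (lift ord0 k); lra.
  suff -> : (fun i => rsum (fun k => a k * P k i)) = P ord0 by [].
  apply: functional_extensionality => i.
  rewrite rsum_recl (rsum_ext (G := fun _ => 0)) => [|k]; last by rewrite tail0; ring.
  by rewrite rsum0 (_ : a ord0 = 1); [ring | lra].
have tail_mean : C (fun i => rsum (fun k => a (lift ord0 k) / s * P (lift ord0 k) i)).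
  apply: IH => // [k|].
    by apply: Rmult_le_pos => //; apply/Rlt_le/Rinv_0_lt_compat; lra.
  rewrite (rsum_ext (G := fun k => / s * a (lift ord0 k))) => [|k]; last by rewrite /Rdiv; ring.
  by rewrite rsumMl Rinv_l.
have := Cconv _ _ s (CP ord0) tail_mean ltac:(have := a0 ord0; lra).
congr C; apply: functional_extensionality => i.
rewrite [in RHS]rsum_recl -rsumMl (_ : 1 - s = a ord0); last lra.
by congr (_ + _); apply: rsum_ext => k; field.
Qed.

Lemma closure_convex d (Om : pt d -> Prop) :
  strictly_convex Om -> convex_set (closure Om).
Proof.
move=> Om_sc x y t xOm yOm t01.
have [->|xy] := classic (x = y).
  by congr closure: yOm; apply: functional_extensionality => i; ring.
have [->|t_ne0] := Req_dec t 0.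
  by congr closure: xOm; apply: functional_extensionality => i; ring.
have [->|t_ne1] := Req_dec t 1.
  by congr closure: yOm; apply: functional_extensionality => i; ring.
by apply/subset_closure/Om_sc => //; lra.
Qed.

Lemma node_in_mesh d (T : list (simplex d)) x : node T x -> mesh_cl T x.
Proof. by move=> [S [TS [k <-]]]; exists S; split; last exact: vertex_in_simplex. Qed.

Lemma node_inode_or_bnode d (T : list (simplex d)) x : node T x -> inode T x \/ bnode T x.
Proof.
move=> Tx; have [xi|xni] := classic (mesh_int T x); [left | right] => //.
by do 2!split => //; apply/subset_closure/node_in_mesh.
Qed.

Lemma inode_not_bnode d (T : list (simplex d)) x : inode T x -> ~ bnode T x.
Proof. by move=> [_ xi] [_ [_ []]]. Qed.

Lemma mesh_sub_closure d (Om : pt d -> Prop) (T : list (simplex d)) :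
  strictly_convex Om -> admissible_mesh Om T -> forall y, mesh_cl T y -> closure Om y.
Proof.
move=> Om_sc [_ [_ [int_Om bnd_Om]]] y [S [TS /in_simplexP [a [a0 [a1 ya]]]]].
rewrite (_ : y = fun i => rsum (fun k => a k * S k i)); last exact: functional_extensionality.
apply: (convex_bary_closed (closure_convex Om_sc)) => // k.
have TSk : node T (S k) by exists S; split => //; exists k.
case: (node_inode_or_bnode TSk) => [[_ Sk_int] | Sk_bnd].
  exact/subset_closure/int_Om.
exact: (proj1 (bnd_Om _ Sk_bnd)).
Qed.

(** * Closedness of the mesh *)

Lemma det_matrix d (A : mat d) : det A = (\det (\matrix_(i, j) A i j))%R.
Proof.
rewrite /det /rsum /rprod /determinant; apply: eq_bigr => s _.
under [in RHS]eq_bigr do rewrite mxE.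
set P := \big[_/_]_(i < d) _.
by case: (odd_perm s); rewrite /= ?expr1 ?expr0 ?mulN1r ?mul1r -?RoppE; lra.
Qed.

Lemma mat_inverse d (A : mat d) : det A <> 0 -> exists Ai : mat d,
  (forall i k, rsum (fun j => A i j * Ai j k) = if i == k then 1 else 0) /\
  (forall i k, rsum (fun j => Ai i j * A j k) = if i == k then 1 else 0).
Proof.
move=> detA; set M : 'M[R]_d := (\matrix_(i, j) A i j)%R.
have Munit : M \in unitmx by rewrite unitmxE unitfE -det_matrix; apply/eqP.
have delta_R (i k : 'I_d) : (if i == k then 1 else 0) = ((i == k)%:R)%R by case: (i == k).
exists (fun i j => invmx M i j); split=> i k; rewrite delta_R.
  have := congr1 (fun X : 'M[R]_d => X i k) (mulmxV Munit); rewrite !mxE => <-.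
  by apply: eq_bigr => j _; rewrite mxE.
have := congr1 (fun X : 'M[R]_d => X i k) (mulVmx Munit); rewrite !mxE => <-.
by apply: eq_bigr => j _; rewrite mxE.
Qed.

Lemma closure_lin_ge d (P : pt d -> Prop) (c z : pt d) lo y :
  (forall x, P x -> lo <= rsum (fun j => (x j - z j) * c j)) -> closure P y ->
  lo <= rsum (fun j => (y j - z j) * c j).
Proof.
move=> P_ge Py; apply: Rnot_lt_le => lt_lo.
set K := rsum (fun j => Rabs (c j)); set v := rsum _ in lt_lo.
have K0 : 0 <= K by apply: rsum_ge0 => j; apply: Rabs_pos.
have gap : 0 < (lo - v) / (K + 1) by apply: Rdiv_lt_0_compat; lra.
have [x [Px xy]] := Py _ gap.
have lip : Rabs (rsum (fun j => (x j - z j) * c j) - v) <= K * norm (psub y x).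
  rewrite /v -rsumB; apply: Rle_trans (abs_rsum_le _) _.
  rewrite Rmult_comm -rsumMl; apply: ler_rsum => j.
  rewrite (_ : _ - _ = - psub y x j * c j); last by rewrite /psub; ring.
  rewrite Rabs_mult Rabs_Ropp; have := abs_coord_le_norm (psub y x) j.
  by have := Rabs_pos (c j); nra.
have : K * norm (psub y x) <= K * ((lo - v) / (K + 1)) by apply: Rmult_le_compat_l; lra.
have -> : K * ((lo - v) / (K + 1)) = (lo - v) - (lo - v) / (K + 1) by field; lra.
by have := P_ge x Px; have := Rle_abs (rsum (fun j => (x j - z j) * c j) - v); lra.
Qed.

Lemma in_simplex_of_edge_coords d (S : simplex d) (y : pt d) (mu : 'I_d -> R) :
  (forall i, 0 <= mu i) -> rsum mu <= 1 ->
  (forall j, y j = S ord0 j + rsum (fun i => mu i * (S (lift ord0 i) j - S ord0 j))) ->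
  in_simplex S y.
Proof.
move=> mu0 mu1 y_mu; apply/in_simplexP.
exists (fun k => if unlift ord0 k is Some i then mu i else 1 - rsum mu).
split; [|split].
- by move=> k; case: (unlift ord0 k) => [i|]; [apply: mu0 | lra].
- by rewrite rsum_recl unlift_none (rsum_ext (G := mu)) => [|i]; rewrite ?liftK //; ring.
- move=> j; rewrite rsum_recl unlift_none y_mu.
  rewrite (rsum_ext (F := fun i => mu i * _)
    (G := fun i => mu i * S (lift ord0 i) j - S ord0 j * mu i)) => [|i]; last ring.
  by rewrite rsumB rsumMl; under [X in _ = _ + X]eq_bigr do rewrite liftK; rewrite /rsum; ring.
Qed.

Lemma edge_coords_exist d (S : simplex d) : nondeg S -> exists Ai : mat d,
  let mu x i := rsum (fun j => (x j - S ord0 j) * Ai j i) in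
  (forall x a, bary S a x -> forall i, mu x i = a (lift ord0 i)) /\
  (forall x j, x j = S ord0 j + rsum (fun i => mu x i * (S (lift ord0 i) j - S ord0 j))).
Proof.
rewrite /nondeg; set A := fun i j => _; move=> detA.
have [Ai [AAi AiA]] := mat_inverse detA; exists Ai; split.
  move=> x a [_ [a1 xa]] i.
  have x_edges j : x j - S ord0 j = rsum (fun i' : 'I_d => a (lift ord0 i') * A i' j).
    rewrite xa -[S ord0 j]Rmult_1_r -a1 -rsumMl -rsumB rsum_recl.
    rewrite (_ : a ord0 * S ord0 j - S ord0 j * a ord0 = 0) ?Rplus_0_l; last ring.
    by apply: rsum_ext => i'; rewrite /A; ring.
  rewrite (rsum_ext (G := fun j => rsum (fun i' => a (lift ord0 i') * (A i' j * Ai j i)))).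
    rewrite exchange_rsum (rsum_ext (G := fun i' => if i' == i then a (lift ord0 i') else 0)).
      exact: rsum_delta.
    by move=> i'; rewrite rsumMl AAi; case: (i' == i); ring.
  by move=> j; rewrite x_edges Rmult_comm -rsumMl; apply: rsum_ext => i'; ring.
move=> x j; rewrite (rsum_ext (G := fun i =>
  rsum (fun j' => (x j' - S ord0 j') * (Ai j' i * A i j)))).
  rewrite exchange_rsum (rsum_ext (G := fun j' => if j' == j then x j' - S ord0 j' else 0)).
    by rewrite rsum_delta; ring.
  by move=> j'; rewrite rsumMl AiA; case: (j' == j); ring.
by move=> i; rewrite Rmult_comm -rsumMl; apply: rsum_ext => j'; rewrite /A; ring.
Qed.

(* The barycentric coordinates of a nondegenerate simplex are affine functions, so
   the inequalities cutting out the simplex survive passage to the closure. *)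
Lemma simplex_closed d (S : simplex d) :
  nondeg S -> forall y, closure (in_simplex S) y -> in_simplex S y.
Proof.
move=> S_nd y yS; have [Ai [mu_bary y_mu]] := edge_coords_exist S_nd.
set mu := fun x i => rsum (fun j => (x j - S ord0 j) * Ai j i) in mu_bary y_mu.
have sum_mu x : rsum (mu x) = - rsum (fun j => (x j - S ord0 j) * - rsum (fun i => Ai j i)).
  rewrite -rsumN /mu exchange_rsum; apply: rsum_ext => j.
  by rewrite Ropp_mult_distr_r Ropp_involutive -rsumMl.
apply: (in_simplex_of_edge_coords (mu := mu y)) => [i||j]; last exact: y_mu.
  apply: (closure_lin_ge (P := in_simplex S)) yS => x /in_simplexP [a xa].
  by rewrite (mu_bary x a xa); case: xa.
rewrite sum_mu; suff : -1 <= rsum (fun j => (y j - S ord0 j) * - rsum (fun i => Ai j i)) by lra.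
apply: (closure_lin_ge (P := in_simplex S)) yS => x /in_simplexP [a xa].
have : rsum (mu x) = rsum (fun i : 'I_d => a (lift ord0 i)) by apply: rsum_ext; apply: mu_bary.
rewrite sum_mu; move: xa => [a0 [a1 _]]; rewrite rsum_recl in a1.
by have := a0 ord0; lra.
Qed.

Lemma mesh_closed d (T : list (simplex d)) : (forall S, In S T -> nondeg S) ->
  forall y, closure (mesh_cl T) y -> mesh_cl T y.
Proof.
elim: T => [|S T IH] T_nd y yT; first by have [z [[S []]]] := yT 1 Rlt_0_1.
have [yS|yS] := classic (closure (in_simplex S) y).
  by exists S; split; [left | apply: simplex_closed => //; apply: T_nd; left].
have [e1 not_near] := not_all_ex_not _ _ yS.
have [e1_gt0 far] := imply_to_and _ _ not_near.
have yT' : closure (mesh_cl T) y.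
  move=> e e_gt0; have [z [[S' [[<-|TS'] zS']] yz]] := yT _ (Rmin_pos _ _ e_gt0 e1_gt0).
    by case: far; exists z; split => //; have := Rmin_r e e1; lra.
  by exists z; split; [exists S' | have := Rmin_l e e1; lra].
have [S' [TS' yS']] := IH (fun S0 TS0 => T_nd S0 (or_intror TS0)) y yT'.
by exists S'; split => //; right.
Qed.

(** * Second differences and the discrete minimum principle *)

Lemma In_enum (I : finType) (x : I) : In x (enum I).
Proof.
have : x \in enum I by rewrite mem_enum.
elim: (enum I) => [|y s IH] //; rewrite in_cons => /orP [/eqP <-|/IH]; [left | right] => //.
Qed.

Lemma nodes_finite d (T : list (simplex d)) :
  exists N : list (pt d), forall x, node T x <-> In x N.
Proof.
exists (flat_map (fun S => List.map S (enum 'I_d.+1)) T) => x; rewrite in_flat_map.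
split=> [[S [TS [k <-]]]|[S [TS /in_map_iff [k [<- _]]]]]; exists S; split => //.
  by apply/in_map_iff; exists k; split; last apply: In_enum.
by exists k.
Qed.

Lemma list_argmin_argmax (A : Type) (N : list A) (W phi : A -> R) : N <> nil ->
  exists x, In x N /\ (forall y, In y N -> W x <= W y) /\
    (forall y, In y N -> W y = W x -> phi y <= phi x).
Proof.
elim: N => [|a [|b l] IH] // _.
  by exists a; split; [left | split=> y [<-|[]]; lra].
have [x [lx [x_min x_max]]] := IH ltac:(done).
have [[Wa_lt|Wa_eq]|Wa_gt] := total_order_T (W a) (W x).
- exists a; split; first by left.
  by split=> y [<-|ly]; [lra | have := x_min y ly; lra | lra | have := x_min y ly; lra].
- have [phi_le|phi_gt] := Rle_dec (phi a) (phi x).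
    exists x; split; first by right.
    by split=> y [<-|ly] => [|||Wy]; [lra | apply: x_min | lra | apply: x_max].
  exists a; split; first by left.
  split=> y [<-|ly] => [|||Wy]; [lra | have := x_min y ly; lra | lra |].
  by have := x_max y ly ltac:(lra); lra.
- exists x; split; first by right.
  by split=> y [<-|ly] => [|||Wy]; [lra | apply: x_min | lra | apply: x_max].
Qed.

Lemma list_slope_bound (A : Type) (N : list A) (W phi : A -> R) m Phi :
  (forall y, In y N -> m <= W y) -> (forall y, In y N -> W y = m -> phi y <= Phi) ->
  exists K, 0 <= K /\ forall y, In y N -> phi y - Phi <= K * (W y - m).
Proof.
elim: N => [|a l IH] W_ge phi_le; first by exists 0; split=> [|y []]; lra.
have [K [K0 K_l]] := IH (fun y ly => W_ge y (or_intror ly)) (fun y ly => phi_le y (or_intror ly)).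
have Wa := W_ge a (or_introl erefl).
have [Wa_eq|Wa_ne] := Req_dec (W a) m.
  exists K; split => // y [<-|ly]; last exact: K_l.
  by have := phi_le a (or_introl erefl) Wa_eq; rewrite Wa_eq; nra.
set Ka := (phi a - Phi) / (W a - m).
exists (Rmax K Ka); split; first by apply: Rle_trans K0 (Rmax_l _ _).
move=> y [<-|ly].
  have : phi a - Phi = Ka * (W a - m) by rewrite /Ka; field; lra.
  by have := Rmax_r K Ka; nra.
by have := K_l y ly; have := W_ge y (or_intror ly); have := Rmax_l K Ka; nra.
Qed.

Definition mesh_concave {d} (T : list (simplex d)) (W : pt d -> R) : Prop :=
  forall S, In S T -> forall a y, bary S a y -> rsum (fun k => a k * W (S k)) <= W y.

Section MeshConcave.
Variables (d : nat) (T : list (simplex d)).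

Lemma mesh_concaveD W1 W2 : mesh_concave T W1 -> mesh_concave T W2 ->
  mesh_concave T (fun y => W1 y + W2 y).
Proof.
move=> W1c W2c S TS a y ay.
rewrite (rsum_ext (G := fun k => a k * W1 (S k) + a k * W2 (S k))) => [|k]; last ring.
by rewrite rsumD; have := W1c S TS a y ay; have := W2c S TS a y ay; lra.
Qed.

Lemma mesh_concaveZ c W : 0 <= c -> mesh_concave T W -> mesh_concave T (fun y => c * W y).
Proof.
move=> c0 Wc S TS a y ay.
rewrite (rsum_ext (G := fun k => c * (a k * W (S k)))) => [|k]; last ring.
by rewrite rsumMl; apply: Rmult_le_compat_l => //; apply: Wc ay.
Qed.

Lemma mesh_concave_nsq c p : c <= 0 -> mesh_concave T (fun y => c * nsq (psub y p)).
Proof.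
move=> c0 S TS a y ay; rewrite (rsum_ext (G := fun k => c * (a k * nsq (psub (S k) p)))) => [|k].
  by rewrite rsumMl; have := nsq_bary_le p ay; nra.
ring.
Qed.

Lemma Vh_mesh_concave u c : Vh T u -> mesh_concave T (fun y => c * u y).
Proof.
move=> u_lin S TS a y ay; have [c0 [b u_aff]] := u_lin S TS.
rewrite (affine_bary u_aff ay) -rsumMl; apply: Req_le.
by apply: rsum_ext => k; ring.
Qed.

Lemma mesh_concave_node_min W x : mesh_concave T W ->
  (forall y, node T y -> W x <= W y) -> forall y, mesh_cl T y -> W x <= W y.
Proof.
move=> Wc x_min y [S [TS /in_simplexP [a ay]]].
apply: Rle_trans (Wc S TS a y ay); have [a0 [a1 _]] := ay.
rewrite -[W x]Rmult_1_r -a1 -rsumMl; apply: ler_rsum => k.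
have := x_min (S k) (ex_intro _ S (conj TS (ex_intro _ k erefl))).
by have := a0 k; nra.
Qed.

End MeshConcave.

(* L_h^B(phi x, phi)(x) = - Dh phi B x + f x * nroot d (det B) at interior nodes. *)
Definition Dh {d} (sig : mat d -> mat d) (lam : mat d -> pt d) (k : pt d -> R)
    (W : pt d -> R) (B : mat d) (x : pt d) : R :=
  rsum (fun j => lam B j * (W (fun i => x i - k x * sig B i j) - 2 * W x
                            + W (fun i => x i + k x * sig B i j)) / (k x ^ 2)).

Section SecondDifferences.
Variables (d : nat) (sig : mat d -> mat d) (lam : mat d -> pt d) (k : pt d -> R).
Variables (B : mat d) (x : pt d).

Lemma Dh_lincomb (W1 W2 : pt d -> R) a b :
  Dh sig lam k (fun y => a * W1 y + b * W2 y) B x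
  = a * Dh sig lam k W1 B x + b * Dh sig lam k W2 B x.
Proof. by rewrite /Dh -!rsumMl -rsumD; apply: rsum_ext => j; rewrite /Rdiv; ring. Qed.

Lemma Dh_scale (W : pt d -> R) c :
  Dh sig lam k (fun y => c * W y) B x = c * Dh sig lam k W B x.
Proof. by rewrite /Dh -rsumMl; apply: rsum_ext => j; rewrite /Rdiv; ring. Qed.

Lemma Dh_const c : Dh sig lam k (fun _ => c) B x = 0.
Proof. by rewrite /Dh -(rsum0 'I_d); apply: rsum_ext => j; rewrite /Rdiv; ring. Qed.

Lemma Dh_eq_on (P : pt d -> Prop) (W1 W2 : pt d -> R) :
  (forall y, P y -> W1 y = W2 y) -> P x ->
  (forall j, P (fun i => x i - k x * sig B i j) /\ P (fun i => x i + k x * sig B i j)) ->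
  Dh sig lam k W1 B x = Dh sig lam k W2 B x.
Proof.
move=> W12 Px Pst; apply: rsum_ext => j; have [Pm Pp] := Pst j.
by rewrite !W12.
Qed.

Lemma Dh_ge0_at_min (W : pt d -> R) : 0 < k x -> (forall j, 0 <= lam B j) ->
  (forall j, W x <= W (fun i => x i - k x * sig B i j) /\
             W x <= W (fun i => x i + k x * sig B i j)) ->
  0 <= Dh sig lam k W B x.
Proof.
move=> k0 lam0 x_min; apply: rsum_ge0 => j; have [Wm Wp] := x_min j.
apply: Rmult_le_pos; last by apply/Rlt_le/Rinv_0_lt_compat/pow_lt.
by have := lam0 j; nra.
Qed.

Lemma tr_ctrl_mat (s : mat d) (l : pt d) :
  tr (ctrl_mat s l) = rsum (fun j => l j * nsq (fun i => s i j)).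
Proof.
rewrite /tr /ctrl_mat /nsq /dot exchange_rsum; apply: rsum_ext => j.
by rewrite -rsumMl; apply: rsum_ext => i; ring.
Qed.

Lemma Dh_nsq p : 0 < k x -> tr (ctrl_mat (sig B) (lam B)) = 1 ->
  Dh sig lam k (fun y => nsq (psub y p)) B x = 2.
Proof.
rewrite tr_ctrl_mat => k0 tr1; rewrite -[2]Rmult_1_r -tr1 -rsumMl.
apply: rsum_ext => j; rewrite nsq_second_difference.
have -> : nsq (fun i => k x * sig B i j) = k x ^ 2 * nsq (fun i => sig B i j).
  by rewrite /nsq /dot -rsumMl; apply: rsum_ext => i; ring.
by field; lra.
Qed.

End SecondDifferences.

Section DiscreteMinimumPrinciple.
Variables (d : nat) (T : list (simplex d)).
Variables (sig : mat d -> mat d) (lam : mat d -> pt d) (k : pt d -> R).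
Hypothesis ctrl_nonneg_trace : forall B, S1 B ->
  (forall j, 0 <= lam B j) /\ tr (ctrl_mat (sig B) (lam B)) = 1.
Hypothesis stencil_in_mesh : forall x, inode T x -> 0 < k x /\ forall B, S1 B -> forall j,
  mesh_cl T (fun i => x i - k x * sig B i j) /\ mesh_cl T (fun i => x i + k x * sig B i j).

(* Among the nodes minimising W take one, x, maximising |y|^2.  If x were interior,
   K W - |y|^2 would also be minimal at x, so K Dh W - 2 >= 0 for every B, while
   Dh W can be made smaller than 1/(K+1). *)
Lemma mesh_min_principle (W : pt d -> R) :
  (exists x, node T x) -> mesh_concave T W ->
  (forall x, inode T x -> forall eps, 0 < eps -> exists B, S1 B /\ Dh sig lam k W B x < eps) ->
  exists z, bnode T z /\ forall y, mesh_cl T y -> W z <= W y.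
Proof.
move=> [x0 Tx0] Wc W_sub.
have [N TN] := nodes_finite T.
have N_nil : N <> nil by move=> N0; have := proj1 (TN x0) Tx0; rewrite N0.
set phi := fun y : pt d => nsq (psub y (fun _ => 0)).
have [x [Nx [x_min x_max]]] := list_argmin_argmax W phi N_nil.
have [K [K0 K_slope]] := list_slope_bound (m := W x) (Phi := phi x) x_min x_max.
set G := fun y => K * W y + (-1) * phi y.
have G_min : forall y, mesh_cl T y -> G x <= G y.
  apply: mesh_concave_node_min => [|y /TN Ny]; last by have := K_slope y Ny; rewrite /G; lra.
  by apply: mesh_concaveD; [apply: mesh_concaveZ | apply: mesh_concave_nsq; lra].
have W_min : forall y, mesh_cl T y -> W x <= W y.
  by apply: mesh_concave_node_min => // y /TN; apply: x_min.
exists x; have [x_int|x_bnd] := node_inode_or_bnode (proj2 (TN x) Nx); last exact: conj x_bnd W_min.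
exfalso; have [k0 stencil] := stencil_in_mesh x_int.
have [B [S1B DhW]] := W_sub x x_int (/ (K + 1)) ltac:(apply: Rinv_0_lt_compat; lra).
have [lam0 tr1] := ctrl_nonneg_trace S1B.
have : 0 <= Dh sig lam k G B x.
  apply: Dh_ge0_at_min => // j; have [Pm Pp] := stencil B S1B j.
  by split; apply: G_min.
rewrite Dh_lincomb /phi Dh_nsq //.
have : K * Dh sig lam k W B x <= K * / (K + 1) by apply: Rmult_le_compat_l; lra.
have : K * / (K + 1) < 1.
  by apply: (Rmult_lt_reg_r (K + 1)); [lra | field_simplify; lra].
lra.
Qed.

End DiscreteMinimumPrinciple.

(** * The control set S_1 *)

Lemma nroot_ge0 d x : 0 <= nroot d x.
Proof. by rewrite /nroot; case: (Rle_dec x 0) => x0 /=; [lra | apply/Rlt_le/exp_pos]. Qed.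

Lemma nroot_le d x : (1 <= d)%N -> nroot d x <= 1 + Rabs x.
Proof.
move=> d1; rewrite /nroot; case: (Rle_dec x 0) => [x_le0|x_gt0] /=; first by have := Rabs_pos x; lra.
have d1R : 1 <= INR d by apply: (le_INR 1); apply/leP.
have inv01 : 0 <= / INR d <= 1.
  split; first by apply/Rlt_le/Rinv_0_lt_compat; lra.
  by rewrite -Rinv_1; apply: Rinv_le_contravar; lra.
rewrite Rabs_right; last lra.
have [x_le1|x_gt1] := Rle_dec x 1.
  have := Rle_Rpower_l x 1 (/ INR d) (proj1 inv01) ltac:(lra).
  by rewrite /Rpower ln_1 Rmult_0_r exp_0; lra.
by have := Rle_Rpower x (/ INR d) 1 ltac:(lra) (proj2 inv01); rewrite Rpower_1; lra.
Qed.

Lemma rsum_mul_delta (I : finType) (i0 : I) (F : I -> R) :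
  rsum (fun i => (if i == i0 then 1 else 0) * F i) = F i0.
Proof. by rewrite -(rsum_delta i0 F); apply: rsum_ext => i; case: (i == i0); ring. Qed.

Lemma quad_form_two_coords d (B : mat d) a b s
    (v := fun i => (if i == a then 1 else 0) + s * (if i == b then 1 else 0)) :
  rsum (fun i => rsum (fun j => v i * B i j * v j))
  = B a a + s * B a b + s * (B b a + s * B b b).
Proof.
have split_v (F : 'I_d -> R) : rsum (fun i => v i * F i) = F a + s * F b.
  rewrite (rsum_ext (G := fun i => (if i == a then 1 else 0) * F i
    + s * ((if i == b then 1 else 0) * F i))) => [|i]; last by rewrite /v; ring.
  by rewrite rsumD rsumMl !rsum_mul_delta.
rewrite (rsum_ext (G := fun i => v i * (B i a + s * B i b))) => [|i].
  by rewrite split_v.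
by rewrite -split_v -rsumMl; apply: rsum_ext => j; ring.
Qed.

Lemma S1_entry_bound d (B : mat d) : S1 B -> forall a b, Rabs (B a b) <= 1.
Proof.
move=> [[B_sym B_psd] trB] a b.
have q_ge0 a' b' s : 0 <= B a' a' + s * B a' b' + s * (B b' a' + s * B b' b').
  by rewrite -quad_form_two_coords; apply: B_psd.
have diag_le1 a' : B a' a' <= 1.
  by rewrite -trB; apply: (ler_rsum_term (F := fun i => B i i)) => i; have := q_ge0 i i 0; lra.
have := q_ge0 a b 1; have := q_ge0 a b (-1); rewrite (B_sym b a).
have := q_ge0 a a 0; have := q_ge0 b b 0; have := diag_le1 a; have := diag_le1 b.
by move=> *; apply: Rabs_le; lra.
Qed.

Lemma det_abs_le d (A : mat d) : (forall i j, Rabs (A i j) <= 1) ->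
  Rabs (det A) <= INR #|{perm 'I_d}|.
Proof.
move=> A1; apply: Rle_trans (abs_rsum_le _) _.
rewrite -[INR _]Rmult_1_r -rsum_const; apply: ler_rsum => s.
rewrite Rabs_mult (_ : Rabs (if odd_perm s then -1 else 1) = 1); last first.
  by case: (odd_perm s); rewrite ?Rabs_Ropp Rabs_R1.
rewrite Rmult_1_l; apply: (big_ind (fun p => Rabs p <= 1)) => [|p q p1 q1|i _]; last exact: A1.
  by rewrite Rabs_R1; lra.
by rewrite Rabs_mult; have := Rabs_pos p; have := Rabs_pos q; nra.
Qed.

Lemma scaled_identity_S1 d : (1 <= d)%N -> S1 (fun i j : 'I_d => if i == j then / INR d else 0).
Proof.
move=> d1; have d_gt0 : 0 < INR d by apply: (lt_INR 0); apply/ltP.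
split; [split|].
- by move=> i j; rewrite eq_sym.
- move=> v; rewrite (rsum_ext (G := fun i => / INR d * (v i * v i))).
    by rewrite rsumMl; apply: Rmult_le_pos; [apply/Rlt_le/Rinv_0_lt_compat | apply: nsq_ge0].
  move=> i; rewrite (_ : / INR d * _ = v i * / INR d * v i); last ring.
  rewrite -(rsum_delta i (fun j => v i * / INR d * v j)).
  by apply: rsum_ext => j; rewrite (eq_sym i j); case: eqP => [->|_]; ring.
- rewrite /tr (rsum_ext (G := fun _ => / INR d)) => [|i]; last by rewrite eqxx.
  by rewrite rsum_const card_ord; field; lra.
Qed.

(** * Solutions of the scheme *)

Section SchemeAtNodes.
Variables (d : nat) (f g : pt d -> R) (sig : mat d -> mat d) (lam : mat d -> pt d).
Variables (T : list (simplex d)) (k : pt d -> R).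

Lemma Hh_zero_bnode s phi x : bnode T x -> (exists B : mat d, S1 B) ->
  Hh_zero f g sig lam T k s phi x -> s = g x.
Proof.
move=> x_bnd [B0 S1B0] [ub lub].
have le0 : s - g x <= 0 by apply: ub; exists B0; split => //; right.
suff : 0 <= s - g x by lra.
apply: lub => r [B [_ [[x_int _]|[_ ->]]]]; last lra.
by case: (inode_not_bnode x_int).
Qed.

Lemma Hh_zero_inode phi x : inode T x -> Hh_zero f g sig lam T k (phi x) phi x ->
  (forall B, S1 B -> f x * nroot d (det B) <= Dh sig lam k phi B x) /\
  (forall eps, 0 < eps -> exists B, S1 B /\ Dh sig lam k phi B x < f x * nroot d (det B) + eps).
Proof.
move=> x_int [ub lub]; split=> [B S1B|eps eps_gt0].
  suff : - Dh sig lam k phi B x + f x * nroot d (det B) <= 0 by lra.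
  by apply: ub; exists B; split => //; left.
apply: NNPP => no_B; suff : 0 <= - eps by lra.
apply: lub => r [B [S1B [[_ ->]|[x_bnd _]]]]; last by case: (inode_not_bnode x_int).
apply: Rnot_lt_le => r_lt; apply: no_B; exists B; split => //.
by rewrite /Dh; lra.
Qed.

End SchemeAtNodes.

Section Scheme.
Variables (d : nat) (Om : pt d -> Prop) (f g : pt d -> R) (F : mat d -> pt d -> Prop).
Variables (sig : mat d -> mat d) (lam : mat d -> pt d).
Variables (T : list (simplex d)) (k : pt d -> R) (e : pt d -> pt d).
Hypothesis d_ge1 : (1 <= d)%N.
Hypothesis Om_sc : strictly_convex Om.
Hypothesis Om_nonempty : exists x, Om x.
Hypothesis f_ge0 : forall x, Om x -> 0 <= f x.
Hypothesis ctrl : forall B, S1 B -> F (sig B) (lam B) /\ ctrl_mat (sig B) (lam B) = B.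
Hypothesis F_lam_ge0 : forall s l, F s l -> forall j, 0 <= l j.
Hypothesis T_adm : admissible_mesh Om T.
Hypothesis k_ok : stencil_ok F T k.
Hypothesis e_ok : valid_ext Om T e.

Lemma ext_id y : mesh_cl T y -> e y = y.
Proof. by move=> yT; apply: (proj1 (e_ok (mesh_sub_closure Om_sc T_adm yT))). Qed.

Lemma ext_in_mesh x : closure Om x -> mesh_cl T (e x).
Proof.
move=> xOm; have [xT|xT] := classic (mesh_cl T x); first by rewrite ext_id.
have [[ex_cl _] _] := proj2 (e_ok xOm) xT.
by apply: mesh_closed ex_cl; case: T_adm.
Qed.

Lemma mesh_has_node : exists x, node T x.
Proof.
have [x0 Om_x0] := Om_nonempty.
have [S [TS _]] := ext_in_mesh (subset_closure Om_x0).
by exists (S ord0), S; split => //; exists ord0.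
Qed.

Lemma inode_in_domain x : inode T x -> Om x.
Proof. by move=> [_ x_int]; case: T_adm => _ [_ [int_Om _]]; apply: int_Om. Qed.

Lemma ctrl_nonneg_trace B : S1 B ->
  (forall j, 0 <= lam B j) /\ tr (ctrl_mat (sig B) (lam B)) = 1.
Proof.
by move=> S1B; have [FB ->] := ctrl S1B; split; [apply: F_lam_ge0 FB | case: S1B].
Qed.

Lemma stencil_in_mesh x : inode T x -> 0 < k x /\ forall B, S1 B -> forall j,
  mesh_cl T (fun i => x i - k x * sig B i j) /\ mesh_cl T (fun i => x i + k x * sig B i j).
Proof.
move=> [_ x_int]; have [k_gt0 st] := k_ok x_int.
by split=> // B S1B j; apply: st (proj1 (ctrl S1B)).
Qed.

Lemma S1_nonempty : exists B : mat d, S1 B.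
Proof. by eexists; apply: scaled_identity_S1. Qed.

(* The interpolant lies above the quadratic (Jensen) and touches it at the nodes. *)
Lemma Dh_interp_quadratic (M : R) (p : pt d) v x B : 0 <= M ->
  interp T (fun y => M / 2 * norm (psub y p) ^ 2) v -> inode T x -> S1 B ->
  M <= Dh sig lam k v B x.
Proof.
move=> M0 [v_lin v_nodes] x_int S1B.
have [k_gt0 st] := stencil_in_mesh x_int; have [lam0 tr1] := ctrl_nonneg_trace S1B.
have v_above : forall y, mesh_cl T y -> M / 2 * nsq (psub y p) <= v y.
  move=> y [S [TS /in_simplexP [a ay]]]; have [c [b v_aff]] := v_lin S TS.
  rewrite (affine_bary v_aff ay) (rsum_ext (G := fun k => M / 2 * (a k * nsq (psub (S k) p)))).
    by rewrite rsumMl; apply: Rmult_le_compat_l; [lra | apply: nsq_bary_le].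
  by move=> j; rewrite v_nodes; [rewrite norm_sqr; ring | exists S; split => //; exists j].
have : 0 <= Dh sig lam k (fun y => 1 * v y + (- (M / 2)) * nsq (psub y p)) B x.
  apply: Dh_ge0_at_min => // j; have [Tm Tp] := st B S1B j.
  have vx : v x = M / 2 * nsq (psub x p) by rewrite v_nodes ?norm_sqr //; case: x_int.
  by rewrite vx; split; [have := v_above _ Tm | have := v_above _ Tp]; lra.
by rewrite Dh_lincomb Dh_nsq //; lra.
Qed.

Variable u : pt d -> R.
Hypothesis u_sol : solves f g sig lam T k e u.

Lemma solution_bnode x : bnode T x -> u x = g x.
Proof.
by move=> x_bnd; apply: (Hh_zero_bnode x_bnd S1_nonempty); apply: (proj2 u_sol) (proj1 x_bnd).
Qed.

Lemma solution_inode x : inode T x ->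
  (forall B, S1 B -> f x * nroot d (det B) <= Dh sig lam k u B x) /\
  (forall eps, 0 < eps -> exists B, S1 B /\ Dh sig lam k u B x < f x * nroot d (det B) + eps).
Proof.
move=> x_int; have xT := node_in_mesh (proj1 x_int).
have Dh_ue B : S1 B -> Dh sig lam k (fun y => u (e y)) B x = Dh sig lam k u B x.
  by move=> S1B; apply: (Dh_eq_on lam (P := mesh_cl T)) (proj2 (stencil_in_mesh x_int) B S1B) => // y /ext_id ->.
have := proj2 u_sol x (proj1 x_int); rewrite -{1}(ext_id xT) => /(Hh_zero_inode x_int).
move=> [lb approx]; split=> [B S1B|eps eps_gt0]; first by rewrite -Dh_ue //; apply: lb.
by have [B [S1B DhB]] := approx eps eps_gt0; exists B; rewrite -Dh_ue.
Qed.

Lemma solution_add_min w : mesh_concave T w ->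
  (forall x B, inode T x -> S1 B -> Dh sig lam k w B x + f x * nroot d (det B) <= 0) ->
  exists z, bnode T z /\ forall x, closure Om x -> u z + w z <= u (e x) + w (e x).
Proof.
move=> w_conc w_sup.
have W_conc : mesh_concave T (fun y => 1 * u y + 1 * w y).
  by apply: mesh_concaveD; [apply: Vh_mesh_concave (proj1 u_sol) | apply: mesh_concaveZ => //; lra].
have W_sub x : inode T x -> forall eps, 0 < eps ->
    exists B, S1 B /\ Dh sig lam k (fun y => 1 * u y + 1 * w y) B x < eps.
  move=> x_int eps eps_gt0; have [B [S1B DhB]] := proj2 (solution_inode x_int) eps eps_gt0.
  by exists B; split => //; rewrite Dh_lincomb; have := w_sup x B x_int S1B; lra.
have [z [z_bnd z_min]] :=
  mesh_min_principle ctrl_nonneg_trace stencil_in_mesh mesh_has_node W_conc W_sub.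
by exists z; split => // x /ext_in_mesh /z_min; lra.
Qed.

Lemma solution_sub_min w : mesh_concave T w ->
  (forall x, inode T x -> exists B, S1 B /\ Dh sig lam k w B x <= 0) ->
  exists z, bnode T z /\ forall x, closure Om x -> w z - u z <= w (e x) - u (e x).
Proof.
move=> w_conc w_sub.
have W_conc : mesh_concave T (fun y => (-1) * u y + 1 * w y).
  by apply: mesh_concaveD; [apply: Vh_mesh_concave (proj1 u_sol) | apply: mesh_concaveZ => //; lra].
have W_sub x : inode T x -> forall eps, 0 < eps ->
    exists B, S1 B /\ Dh sig lam k (fun y => (-1) * u y + 1 * w y) B x < eps.
  move=> x_int eps eps_gt0; have [B [S1B DhB]] := w_sub x x_int.
  exists B; split => //; rewrite Dh_lincomb; have := proj1 (solution_inode x_int) B S1B.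
  by have := f_ge0 (inode_in_domain x_int); have := nroot_ge0 d (det B); nra.
have [z [z_bnd z_min]] :=
  mesh_min_principle ctrl_nonneg_trace stencil_in_mesh mesh_has_node W_conc W_sub.
by exists z; split => // x /ext_in_mesh /z_min; lra.
Qed.

Lemma solution_le_boundary :
  exists z, bnode T z /\ forall x, closure Om x -> u (e x) <= g z.
Proof.
have zero_conc : mesh_concave T (fun _ => 0).
  by move=> S TS a y _; rewrite (rsum_ext (G := fun _ => 0)) ?rsum0 => [|j]; [lra | ring].
have [B0 S1B0] := S1_nonempty.
have zero_sub x : inode T x -> exists B, S1 B /\ Dh sig lam k (fun _ => 0) B x <= 0.
  by move=> _; exists B0; rewrite Dh_const; split => //; lra.
have [z [z_bnd z_min]] := solution_sub_min zero_conc zero_sub.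
by exists z; split => // x /z_min; rewrite (solution_bnode z_bnd); lra.
Qed.

Lemma solution_ge_boundary c p : 0 <= c ->
  (forall x (B : mat d), Om x -> S1 B -> f x * nroot d (det B) <= 2 * c) ->
  exists z, bnode T z /\ forall x, closure Om x -> g z - c * nsq (psub z p) <= u (e x).
Proof.
move=> c0 f_le.
have w_conc : mesh_concave T (fun y => (- c) * nsq (psub y p)).
  by apply: mesh_concave_nsq; lra.
have w_sup x B : inode T x -> S1 B ->
    Dh sig lam k (fun y => (- c) * nsq (psub y p)) B x + f x * nroot d (det B) <= 0.
  move=> x_int S1B; have [k_gt0 _] := stencil_in_mesh x_int.
  rewrite Dh_scale Dh_nsq //; last exact: proj2 (ctrl_nonneg_trace S1B).
  by have := f_le x B (inode_in_domain x_int) S1B; lra.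
have [z [z_bnd z_min]] := solution_add_min w_conc w_sup.
exists z; split => // x xOm; have := z_min x xOm; rewrite (solution_bnode z_bnd).
by have := nsq_ge0 (psub (e x) p); nra.
Qed.

Section Barrier.
Variables (p : pt d) (M : R) (v : pt d -> R).
Hypothesis M_bound : forall x (B : mat d), Om x -> S1 B -> Rabs (f x) * nroot d (det B) <= M.
Hypothesis v_interp : interp T (fun y => M / 2 * norm (psub y p) ^ 2) v.

Lemma barrier_ge0 : 0 <= M.
Proof.
have [x0 Om_x0] := Om_nonempty; have [B0 S1B0] := S1_nonempty.
have := M_bound Om_x0 S1B0; have := Rabs_pos (f x0); have := nroot_ge0 d (det B0); nra.
Qed.

Lemma Dh_barrier x B : inode T x -> S1 B -> M <= Dh sig lam k v B x.
Proof. exact: Dh_interp_quadratic barrier_ge0 v_interp. Qed.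

Lemma solution_sub_barrier_min :
  exists z, bnode T z /\ forall x, closure Om x -> u z - v z <= u (e x) - v (e x).
Proof.
have w_sup x B : inode T x -> S1 B ->
    Dh sig lam k (fun y => (-1) * v y) B x + f x * nroot d (det B) <= 0.
  move=> x_int S1B; rewrite Dh_scale; have := Dh_barrier x_int S1B.
  have := M_bound (inode_in_domain x_int) S1B; have := Rle_abs (f x).
  by have := nroot_ge0 d (det B); nra.
have [z [z_bnd z_min]] := solution_add_min (Vh_mesh_concave (-1) (proj1 v_interp)) w_sup.
by exists z; split => // x /z_min; lra.
Qed.

Lemma solution_add_barrier_max :
  exists z, bnode T z /\ forall x, closure Om x -> u (e x) + v (e x) <= u z + v z.
Proof.
have [B0 S1B0] := S1_nonempty.
have w_sub x : inode T x -> exists B, S1 B /\ Dh sig lam k (fun y => (-1) * v y) B x <= 0.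
  move=> x_int; exists B0; split => //; rewrite Dh_scale.
  by have := Dh_barrier x_int S1B0; have := barrier_ge0; lra.
have [z [z_bnd z_min]] := solution_sub_min (Vh_mesh_concave (-1) (proj1 v_interp)) w_sub.
by exists z; split => // x /z_min; lra.
Qed.

End Barrier.

End Scheme.

(** * Mesh-independent bounds *)

Lemma closure_nsq_bound d (Om : pt d -> Prop) Rb : (forall x, Om x -> norm x <= Rb) ->
  forall z, closure Om z -> nsq (psub z (fun _ => 0)) <= INR d * (Rb + 1) ^ 2.
Proof.
move=> Om_le z zOm; have [x [Om_x zx]] := zOm 1 Rlt_0_1.
rewrite (_ : INR d = INR #|'I_d|); last by rewrite card_ord.
rewrite -rsum_const; apply: ler_rsum => i.
have x_i := abs_coord_le_norm x i; have x_le := Om_le x Om_x.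
have zx_i : Rabs (z i - x i) <= norm (psub z x) := abs_coord_le_norm (psub z x) i.
have : Rabs (z i) < Rb + 1.
  by have := Rabs_triang (x i) (z i - x i); rewrite (_ : x i + (z i - x i) = z i); [lra | ring].
by rewrite /psub Rminus_0_r; move/Rabs_def2; nra.
Qed.

Lemma f_nroot_det_bound d (Om : pt d -> Prop) (f : pt d -> R) Fb : (1 <= d)%N ->
  (forall x, Om x -> 0 <= f x) -> (forall x, Om x -> Rabs (f x) <= Fb) ->
  forall x (B : mat d), Om x -> S1 B -> f x * nroot d (det B) <= Fb * (1 + INR #|{perm 'I_d}|).
Proof.
move=> d1 f_ge0 f_le x B Om_x S1B.
have := det_abs_le (S1_entry_bound S1B); have := nroot_le (det B) d1.
have := nroot_ge0 d (det B); have := f_le x Om_x; rewrite Rabs_right; last exact/Rle_ge/f_ge0.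
by move=> *; apply: Rmult_le_compat => //; [apply: f_ge0 | lra].
Qed.

Lemma uniform_bound d (Om : pt d -> Prop) (f g : pt d -> R) (F : mat d -> pt d -> Prop)
    (sig : mat d -> mat d) (lam : mat d -> pt d) :
  (1 <= d)%N -> (exists x, Om x) -> bounded_set Om -> strictly_convex Om ->
  (forall x, Om x -> 0 <= f x) -> bounded_on Om f -> bounded_on (bdry Om) g ->
  (forall B, S1 B -> F (sig B) (lam B) /\ ctrl_mat (sig B) (lam B) = B) ->
  (forall s l, F s l -> forall j, 0 <= l j) ->
  exists C, 0 < C /\ forall T k e u, admissible_mesh Om T -> stencil_ok F T k ->
    valid_ext Om T e -> solves f g sig lam T k e u ->
    forall x, closure Om x -> Rabs (u (e x)) <= C.
Proof.
move=> d1 Om_ne [Rb Om_le] Om_sc f_ge0 [Fb f_le] [Gb g_le] ctrl F_lam.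
set c := Rabs Fb * (1 + INR #|{perm 'I_d}|) / 2.
set Zb := INR d * (Rb + 1) ^ 2.
have c0 : 0 <= c.
  by have := Rabs_pos Fb; have := pos_INR #|{perm 'I_d}|; rewrite /c; nra.
have Zb0 : 0 <= Zb by apply: Rmult_le_pos; [apply: pos_INR | apply: pow2_ge_0].
exists (Rabs Gb + c * Zb + 1); split; first by have := Rabs_pos Gb; nra.
move=> T k e u T_adm k_ok e_ok u_sol x xOm.
have bnd_Om z : bnode T z -> bdry Om z by case: T_adm => _ [_ [_]]; apply.
have f_le2c : forall x (B : mat d), Om x -> S1 B -> f x * nroot d (det B) <= 2 * c.
  move=> y B Om_y S1B; rewrite /c (_ : 2 * _ = Rabs Fb * (1 + INR #|{perm 'I_d}|)); last field.
  apply: (f_nroot_det_bound d1 f_ge0) => // z Om_z.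
  by apply: Rle_trans (f_le z Om_z) (Rle_abs _).
have [z1 [z1_bnd z1_max]] :=
  @solution_le_boundary d Om f g F sig lam T k e d1 Om_sc Om_ne f_ge0 ctrl F_lam T_adm k_ok e_ok u u_sol.
have [z2 [z2_bnd z2_min]] := @solution_ge_boundary d Om f g F sig lam T k e
  d1 Om_sc Om_ne ctrl F_lam T_adm k_ok e_ok u u_sol c (fun _ => 0) c0 f_le2c.
have := z1_max x xOm; have := z2_min x xOm.
have := g_le z1 (bnd_Om z1 z1_bnd); have := g_le z2 (bnd_Om z2 z2_bnd).
have := closure_nsq_bound Om_le (proj1 (bnd_Om z2 z2_bnd)); rewrite -/Zb.
have := Rle_abs Gb; have := Rle_abs (g z1); have := Rabs_pos Gb.
have := Rabs_Ropp (g z2); have := Rle_abs (- g z2).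
by move=> *; apply: Rabs_le; nra.
Qed.
Theorem lemma6p2 (d : nat) (Om : pt d -> Prop) (f g : pt d -> R)
  (F : mat d -> pt d -> Prop) (C0 : R) (sig : mat d -> mat d) (lam : mat d -> pt d) :
  (Peano.le 2 d) ->
  (exists x, Om x) -> is_open Om -> bounded_set Om -> strictly_convex Om ->
  (forall x, Om x -> 0 <= f x) -> bounded_on Om f -> cont_on Om f ->
  bounded_on (bdry Om) g -> cont_on (bdry Om) g ->
  compact_ctrl F ->
  (forall B, S1 B -> F (sig B) (lam B) /\ ctrl_mat (sig B) (lam B) = B) ->
  (forall s l, F s l -> S1 (ctrl_mat s l) /\ sig (ctrl_mat s l) = s /\ lam (ctrl_mat s l) = l) ->
  0 < C0 ->
  (forall s l, F s l -> (forall j, 0 <= l j) /\ vsum l = C0) ->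
  (forall kappa : R, exists C, 0 < C /\
     forall (T : list (simplex d)) (k : pt d -> R) (e : pt d -> pt d) (u : pt d -> R),
       admissible_mesh Om T -> shape_reg kappa T -> stencil_ok F T k ->
       valid_ext Om T e -> solves f g sig lam T k e u ->
       forall x, closure Om x -> Rabs (u (e x)) <= C)
  /\
  (forall (p : pt d) (M : R),
     (forall x (B : mat d), Om x -> S1 B -> Rabs (f x) * nroot d (det B) <= M) ->
     forall (T : list (simplex d)) (k : pt d -> R) (e : pt d -> pt d) (u v : pt d -> R),
       admissible_mesh Om T -> stencil_ok F T k ->
       valid_ext Om T e -> solves f g sig lam T k e u ->
       interp T (fun x => M / 2 * (norm (psub x p)) ^ 2) v ->
       (exists z, bnode T z /\
          forall x, closure Om x -> u z - v z <= u (e x) - v (e x)) /\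
       (exists z, bnode T z /\
          forall x, closure Om x -> u (e x) + v (e x) <= u z + v z)).
Proof.
move=> d2 Om_ne _ Om_bd Om_sc f_ge0 f_bd _ g_bd _ _ ctrl _ _ F_C0.
have d1 : (1 <= d)%N by apply/leP; lia.
have F_lam : forall s l, F s l -> forall j, 0 <= l j by move=> s l /F_C0 [].
split.
  move=> kappa; have [C [C_gt0 C_bd]] :=
    uniform_bound d1 Om_ne Om_bd Om_sc f_ge0 f_bd g_bd ctrl F_lam.
  by exists C; split => // T k e u T_adm _; apply: C_bd.
move=> p M M_bd T k e u v T_adm k_ok e_ok u_sol v_interp; split.
  exact: (@solution_sub_barrier_min d Om f g F sig lam T k e
    d1 Om_sc Om_ne ctrl F_lam T_adm k_ok e_ok u u_sol p M v M_bd v_interp).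
exact: (@solution_add_barrier_max d Om f g F sig lam T k e
  d1 Om_sc Om_ne f_ge0 ctrl F_lam T_adm k_ok e_ok u u_sol p M v M_bd v_interp).
Qed.
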